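(* Let $n \geq 2$ be an integer and $A$ a finite set of size $q \geq 2$. Let $d_1, \dots, d_\ell$ be the divisors $d$ of $n$ with $d\neq 1$ (including $d=n$). Then \[ \mathrm{ICA}(\mathbb{Z}_n; A) \cong (\mathbb{Z}_{d_1} \wr \mathrm{Sym}_{\alpha(d_1,q)}) \times \dots \times (\mathbb{Z}_{d_\ell} \wr \mathrm{Sym}_{\alpha(d_\ell,q)}) \times \mathrm{Sym}_q. \]
   Context: A cellular automaton over $\mathbb{Z}_n$ and $A$ is a map $\tau: A^{\mathbb{Z}_n}\to A^{\mathbb{Z}_n}$ for which there exist a finite $S\subseteq\mathbb{Z}_n$ and $\mu:A^S\to A$ with $(g)(x)\tau = ((R_g\circ x)|_S)\mu$ for all $x$ and $g$, where $R_g\circ x$ is $h\mapsto x(h+g)$ (maps applied on the right); $\mathrm{CA}(\mathbb{Z}_n;A)$ is the semigroup of these under composition and $\mathrm{ICA}(\mathbb{Z}_n;A)$ is its group of units. $\mathrm{Sym}_\alpha$ is the symmetric group on $\{1,\dots,\alpha\}$. $\mathbb{Z}_d\wr\mathrm{Sym}_\alpha = \{(v;\phi): v\in(\mathbb{Z}_d)^\alpha,\ \phi\in\mathrm{Sym}_\alpha\}$ with product $(v;\phi)(w;\psi) = (v + w^\phi;\phi\psi)$, where $\phi$ acts on $w$ by permuting coordinates. $\alpha(d,q) = \frac{1}{d}\sum_{b\mid d}\mu(d/b) q^b$ with $\mu$ the Möbius function (the number of orbits of size $d$ of the cyclic shift on $A^n$). *)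

From HB Require Import structures.
From mathcomp Require Import all_boot all_order all_algebra all_fingroup.
Set Implicit Arguments. Unset Strict Implicit. Unset Printing Implicit Defensive.
Import GRing.Theory.

Definition config (n : nat) (A : finType) := {ffun 'Z_n -> A}.

Definition shift (n : nat) (A : finType) (g : 'Z_n) (x : config n A) : config n A :=
  [ffun h => x (h + g)%R].

Definition restr (n : nat) (A : finType) (S : {set 'Z_n}) (x : config n A)
  : {ffun {h : 'Z_n | h \in S} -> A} := [ffun s => x (val s)].

Definition is_CA (n : nat) (A : finType) (tau : config n A -> config n A) : Prop :=
  exists (S : {set 'Z_n}) (mu : {ffun {h : 'Z_n | h \in S} -> A} -> A),
    forall (x : config n A) (g : 'Z_n), tau x g = mu (restr S (shift g x)).

(* Such a map is a bijection, so we
   represent units as permutations of configurations; the mathcomp product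
   (s * t) x = t (s x) is composition with maps written on the right. *)
Definition is_ICA (n : nat) (A : finType) (p : {perm config n A}) : Prop :=
  is_CA (fun x => p x) /\ is_CA (fun x => (p^-1)%g x).

Definition mobius (m : nat) : int :=
  if all (fun p => logn p m == 1%N) (primes m) then ((-1) ^+ size (primes m))%R else 0%R.

(* alpha(d,q) = (1/d) sum_{b | d} mu(d/b) q^b  (an exact integer division) *)
Definition alpha (d q : nat) : nat :=
  `| ((\sum_(b <- divisors d) mobius (d %/ b) * (q%:Z) ^+ b)%R %/ d%:Z)%Z |%N.

Definition WR (d a : nat) := ({ffun 'I_a -> 'Z_d} * {perm 'I_a})%type.

(* (v;phi)(w;psi) = (v + w^phi; phi psi), with (w^phi)(i) = w (phi i),
   phi psi = mathcomp product (first phi then psi). *)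
Definition wr_mul (d a : nat) (x y : WR d a) : WR d a :=
  ([ffun i => (x.1 i + y.1 (x.2 i))%R], (x.2 * y.2)%g).

Definition divs (n : nat) : seq nat := [seq d <- divisors n | d != 1%N].

Definition dv (n : nat) (i : 'I_(size (divs n))) : nat := nth 0%N (divs n) i.

Definition WRprod (n q : nat) :=
  ({dffun forall i : 'I_(size (divs n)), WR (dv i) (alpha (dv i) q)} * {perm 'I_q})%type.

Definition rhs_mul (n q : nat) (x y : WRprod n q) : WRprod n q :=
  (@finfun _ (fun i => WR (dv i) (alpha (dv i) q)) (fun i => wr_mul (x.1 i) (y.1 i)),
   (x.2 * y.2)%g).

From mathcomp Require Import all_boot all_order all_algebra all_fingroup.
Set Implicit Arguments. Unset Strict Implicit. Unset Printing Implicit Defensive.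
Import GRing.Theory.

(* A cellular automaton over Z_n is the same thing as a map commuting with the
   shifts, so an invertible one permutes the shift orbits of A^{Z_n}, preserving
   the period of each orbit.  Counting the q^d configurations of period dividing d
   gives q^d = sum_{b | d} b N_b, so by Moebius inversion there are
   N_d = alpha(d, q) orbits of period d.  Fixing a representative of
   every orbit, such a permutation p is determined by the permutation it induces
   on the orbits of each period d and, for each orbit of period d, by the shift
   in Z_d relating the image of its representative to the representative of the
   image orbit; composition of automata then becomes the wreath product law.
   Orbits of period 1 (constant configurations) carry no shift and give Sym_q. *)

(** * Moebius inversion *)

Lemma mobius_sqr_dvd p k : prime p -> 0 < k -> p ^ 2 %| k -> mobius k = 0%R.
Proof.
move=> p_pr k_gt0 p2k; rewrite /mobius; case: ifP => // /allP /(_ p).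
have pk : p %| k by apply: dvdn_trans p2k; rewrite dvdn_exp.
rewrite mem_primes p_pr k_gt0 pk => /(_ isT) /eqP logp1.
by move: p2k; rewrite pfactor_dvdn // logp1.
Qed.

Lemma mobius_primeM p e : prime p -> 0 < e -> ~~ (p %| e) ->
  mobius (p * e) = (- mobius e)%R.
Proof.
move=> p_pr e_gt0 pNe; have p_gt0 := prime_gt0 p_pr.
have pNprimes : p \notin primes e by rewrite mem_primes (negbTE pNe) !andbF.
have primes_pe : perm_eq (primes (p * e)) (p :: primes e).
  apply: uniq_perm; rewrite /= ?pNprimes ?primes_uniq // => r.
  by rewrite primesM // primes_prime // !in_cons in_nil orbF.
have logn_pe r : r \in primes e -> logn r (p * e) = logn r e.
  move=> re; rewrite lognM // logn_prime //.
  by case: eqP => [rp|_ //]; rewrite -rp re in pNprimes.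
rewrite /mobius (perm_size primes_pe) (perm_all _ primes_pe) /=.
rewrite lognM // logn_prime // eqxx (logn_coprime (p := p)) ?prime_coprime //=.
rewrite (eq_in_all (a2 := fun r => logn r e == 1)) => [|r /logn_pe -> //].
by case: ifP => _; rewrite ?oppr0 // exprS mulN1r.
Qed.

Lemma divisors_gt0 d b : b \in divisors d -> 0 < b.
Proof.
case: d => [|d]; first by rewrite inE => /eqP ->.
by rewrite -dvdn_divisors // => /dvdn_gt0; apply.
Qed.

Lemma big_divisors_dvd (F : nat -> int) d c : 0 < d -> c %| d ->
  (\sum_(b <- divisors d | (c %| b)%N) F b = \sum_(b <- divisors (d %/ c)) F (c * b)%N)%R.
Proof.
move=> d_gt0 cd; have c_gt0 := dvdn_gt0 d_gt0 cd.
have dc_gt0 : 0 < d %/ c by rewrite divn_gt0 // dvdn_leq.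
rewrite -big_filter -(big_map (muln c) xpredT); apply: perm_big.
apply: uniq_perm; first by rewrite filter_uniq // divisors_uniq.
  by rewrite map_inj_uniq ?divisors_uniq // => x y /eqP; rewrite eqn_pmul2l // => /eqP.
move=> b; rewrite mem_filter -dvdn_divisors //; apply/idP/mapP => [/andP[cb bd]|].
  exists (b %/ c); last by rewrite mulnC divnK.
  by rewrite -dvdn_divisors // dvdn_divRL // divnK.
by case=> e; rewrite -dvdn_divisors // => ed ->; rewrite /= dvdn_mulr // mulnC -dvdn_divRL.
Qed.

Lemma sum_mobius_divisors m : 0 < m ->
  (\sum_(e <- divisors m) mobius e = (m == 1%N)%:R)%R.
Proof.
move=> m_gt0; case: (ltngtP m 1) => [|m_gt1|->]; first by rewrite ltnNge m_gt0.
  2: by rewrite (_ : divisors 1 = [:: 1]) // big_seq1.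
(* For a prime [p | m], [e] and [p e] cancel when [p] does not divide [e], and
   multiples of [p^2] contribute nothing. *)
have p_pr := pdiv_prime m_gt1; have pm := pdiv_dvd m; set p := pdiv m in p_pr pm *.
have mp_gt0 : 0 < m %/ p by rewrite divn_gt0 ?prime_gt0 // dvdn_leq.
rewrite (bigID (dvdn p)) /= big_divisors_dvd // (bigID (dvdn p)) /=.
rewrite big1_seq ?add0r => [|b /andP[pb /divisors_gt0 b_gt0]]; last first.
  apply: (mobius_sqr_dvd p_pr); first by rewrite muln_gt0 b_gt0 prime_gt0.
  by rewrite expnS dvdn_pmul2l ?prime_gt0.
rewrite big_seq_cond (eq_bigr (fun b => - mobius b)%R) => [|b /andP[/divisors_gt0 ? ?]];
  last exact: mobius_primeM.
rewrite sumrN -big_seq_cond addrC; apply/eqP; rewrite subr_eq0; apply/eqP.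
rewrite -[LHS]big_filter -[RHS]big_filter; apply: perm_big.
apply: uniq_perm; rewrite ?filter_uniq ?divisors_uniq // => b.
rewrite !mem_filter -!dvdn_divisors //=; case pb: (p %| b) => //=.
have cbp : coprime b p by rewrite coprime_sym prime_coprime // pb.
by rewrite dvdn_divRL // Gauss_dvd // pm andbT.
Qed.

Lemma perm_divn_divisors k : 0 < k ->
  perm_eq [seq k %/ b | b <- divisors k] (divisors k).
Proof.
move=> k_gt0; have divK b : b %| k -> k %/ (k %/ b) = b.
  by move=> bk; rewrite divnA // mulKn // (dvdn_gt0 k_gt0 bk).
apply: uniq_perm; rewrite ?divisors_uniq //.
  rewrite map_inj_in_uniq ?divisors_uniq // => b b'.
  by rewrite -!dvdn_divisors // => /divK {2}<- /divK {2}<- ->.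
move=> b; apply/mapP/idP => [[e]|]; rewrite -!dvdn_divisors //.
  by move=> ek ->; apply: dvdn_div.
by move=> bk; exists (k %/ b); rewrite ?divK // -dvdn_divisors // dvdn_div.
Qed.

Lemma mobius_inversion (g G : nat -> int) d : 0 < d ->
  (forall b, b %| d -> (G b = \sum_(c <- divisors b) g c)%R) ->
  (\sum_(b <- divisors d) mobius (d %/ b) * G b = g d)%R.
Proof.
move=> d_gt0 defG.
have sum_mobius_co k : 0 < k ->
    (\sum_(b <- divisors k) mobius (k %/ b) = (k == 1%N)%:R)%R.
  move=> k_gt0; rewrite -sum_mobius_divisors //.
  by rewrite -[RHS](perm_big _ (perm_divn_divisors k_gt0)) big_map.
transitivity
  (\sum_(b <- divisors d) \sum_(c <- divisors d | (c %| b)%N) mobius (d %/ b) * g c)%R.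
  apply: eq_big_seq => b; rewrite -dvdn_divisors // => bd.
  rewrite defG // mulr_sumr -[RHS]big_filter; apply: perm_big.
  apply: uniq_perm; rewrite ?filter_uniq ?divisors_uniq // => c.
  rewrite mem_filter -!dvdn_divisors ?(dvdn_gt0 d_gt0 bd) //=.
  by case cb: (c %| b); rewrite ?(dvdn_trans cb bd).
rewrite (exchange_big_dep xpredT) //=.
rewrite (eq_big_seq (fun c => (d %/ c == 1)%N%:R * g c)%R); last first.
  move=> c; rewrite -dvdn_divisors // => cd; rewrite -mulr_suml big_divisors_dvd //.
  have dc_gt0 : 0 < d %/ c by rewrite divn_gt0 ?(dvdn_gt0 d_gt0 cd) // dvdn_leq.
  rewrite -(sum_mobius_co _ dc_gt0); congr (_ * _)%R.
  by apply: eq_bigr => b _; rewrite divnMA.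
rewrite (big_rem d) ?divisors_id // divnn d_gt0 mul1r big1_seq => [|c]; first exact: addr0.
rewrite (mem_rem_uniq _ (divisors_uniq d)) inE -dvdn_divisors // => /andP[_ /andP[cNd cd]].
by case: eqP => [dc1|]; rewrite ?mul0r //; move: cNd; rewrite -{1}(divnK cd) dc1 mul1n eqxx.
Qed.

(** * Orbits of the shift *)

Section ShiftOrbits.
Variables (m : nat) (A : finType).
Local Notation n := m.+2.
Local Notation X := (config n A).

Definition shiftn (k : nat) (x : X) : X := shift (k%:R : 'Z_n)%R x.

Lemma shiftnD a b x : shiftn a (shiftn b x) = shiftn (a + b) x.
Proof. by apply/ffunP => h; rewrite !ffunE natrD addrA. Qed.

Lemma shiftn0 x : shiftn 0 x = x.
Proof. by apply/ffunP => h; rewrite !ffunE addr0. Qed.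

Lemma shiftnn x : shiftn n x = x.
Proof. by rewrite /shiftn pchar_Zp // -[shift _ _]/(shiftn 0 x) shiftn0. Qed.

Lemma shiftn_inj k : injective (shiftn k).
Proof.
apply: (can_inj (g := shiftn (n - k %% n))) => x.
rewrite shiftnD /shiftn -Zp_nat_mod // -modnDmr subnK ?modnn; last exact/ltnW/ltn_pmod.
by rewrite -[shift _ _]/(shiftn 0 x) shiftn0.
Qed.

Lemma shift_shiftn (g : 'Z_n) x : shift g x = shiftn g x.
Proof. by rewrite /shiftn natr_Zp. Qed.

Lemma iter_shift1 k x : iter k (shiftn 1) x = shiftn k x.
Proof. by elim: k => [|k /= ->]; rewrite ?shiftn0 // shiftnD. Qed.

Let shift1_sym := fconnect_sym (@shiftn_inj 1).

Definition period (x : X) : nat := fingraph.order (shiftn 1) x.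
Definition orbit_rep (x : X) : X := froot (shiftn 1) x.
Definition offset (x : X) : nat := findex (shiftn 1) (orbit_rep x) x.

Lemma period_gt0 x : 0 < period x.
Proof. exact: fingraph.order_gt0. Qed.

Lemma shiftn_period x : shiftn (period x) x = x.
Proof. by rewrite -iter_shift1 iter_order //; apply: shiftn_inj. Qed.

Lemma shiftn_modp k x : shiftn k x = shiftn (k %% period x) x.
Proof.
have shiftn_mulp i : shiftn (i * period x) x = x.
  by elim: i => [|i IHi]; rewrite ?shiftn0 // mulSn -shiftnD IHi shiftn_period.
by rewrite {1}(divn_eq k (period x)) addnC -shiftnD shiftn_mulp.
Qed.

Lemma shiftn_eq_mod a b x : shiftn a x = shiftn b x <-> a = b %[mod period x].
Proof.
rewrite shiftn_modp [shiftn b x]shiftn_modp; split=> [|-> //].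
have findex_shiftn k : findex (shiftn 1) x (shiftn (k %% period x) x) = k %% period x.
  by rewrite -iter_shift1 findex_iter // ltn_pmod ?period_gt0.
by move/(congr1 (findex (shiftn 1) x)); rewrite !findex_shiftn.
Qed.

Lemma shiftn_fix k x : shiftn k x = x <-> period x %| k.
Proof.
rewrite -{2}[x]shiftn0 /dvdn; split=> [/shiftn_eq_mod|/eqP kp0]; first by rewrite mod0n => ->.
by apply/shiftn_eq_mod; rewrite mod0n.
Qed.

Lemma period_dvdn x : period x %| n.
Proof. exact/shiftn_fix/shiftnn. Qed.

Lemma eq_period x y :
  (forall k, shiftn k x = x <-> shiftn k y = y) -> period x = period y.
Proof.
move=> eq_fix; apply/eqP; rewrite eqn_dvd; apply/andP; split.
  by apply/shiftn_fix/eq_fix/shiftn_period.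
by apply/shiftn_fix/eq_fix/shiftn_period.
Qed.

Lemma period_shiftn k x : period (shiftn k x) = period x.
Proof.
apply: eq_period => j; rewrite !shiftnD addnC -shiftnD.
by split=> [/shiftn_inj | ->].
Qed.

Lemma fconnect_shiftn x y : fconnect (shiftn 1) x y <-> exists k, y = shiftn k x.
Proof.
split=> [/iter_findex <-|[k ->]]; first by exists (findex (shiftn 1) x y); rewrite iter_shift1.
by rewrite -iter_shift1 fconnect_iter.
Qed.

Lemma orbit_rep_eq x y : orbit_rep x = orbit_rep y <-> exists k, y = shiftn k x.
Proof.
split=> [eq_rep|/fconnect_shiftn]; last by rewrite -(root_connect shift1_sym) => /eqP.
by apply/fconnect_shiftn; rewrite -(root_connect shift1_sym) -/(orbit_rep _) eq_rep.
Qed.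

Lemma orbit_rep_shiftn k x : orbit_rep (shiftn k x) = orbit_rep x.
Proof. by apply/esym/orbit_rep_eq; exists k. Qed.

Lemma orbit_repK x : orbit_rep (orbit_rep x) = orbit_rep x.
Proof. exact: root_root shift1_sym x. Qed.

Lemma period_orbit_rep x : period (orbit_rep x) = period x.
Proof.
have [k ->] := (orbit_rep_eq x (orbit_rep x)).1 (esym (orbit_repK x)).
exact: period_shiftn.
Qed.

Lemma shiftn_offset x : shiftn (offset x) (orbit_rep x) = x.
Proof. by rewrite -iter_shift1 iter_findex // shift1_sym connect_root. Qed.

Lemma offset_lt x : offset x < period x.
Proof. by rewrite -period_orbit_rep findex_max // shift1_sym connect_root. Qed.

Lemma offset_rep (x : X) : orbit_rep x = x -> offset x = 0.
Proof. by rewrite /offset => ->; apply: findex0. Qed.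

Lemma offset_shiftn_rep k (x : X) :
  orbit_rep x = x -> offset (shiftn k x) = k %% period x.
Proof.
rewrite /offset orbit_rep_shiftn => ->.
by rewrite shiftn_modp -iter_shift1 findex_iter // ltn_pmod ?period_gt0.
Qed.

Lemma offset_shiftn k (x : X) : offset (shiftn k x) = k + offset x %[mod period x].
Proof.
rewrite -period_orbit_rep; apply/shiftn_eq_mod.
by rewrite -shiftnD shiftn_offset -{1}(orbit_rep_shiftn k x) shiftn_offset.
Qed.

End ShiftOrbits.

Section Counting.
Variables (m : nat) (A : finType).
Local Notation n := m.+2.
Local Notation X := (config n A).

Definition of_period d := [set x : X | period x == d].
Definition orbit_reps d := [set x in of_period d | orbit_rep x == x].
Definition fixed d := [set x : X | shiftn d x == x].

Lemma orbit_rep_in x : orbit_rep x \in orbit_reps (period x).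
Proof. by rewrite !inE period_orbit_rep orbit_repK !eqxx. Qed.

Lemma card_of_period d : #|of_period d| = #|orbit_reps d| * d.
Proof.
rewrite -(@fcard_order_set _ _ (@shiftn_inj m A 1) d (of_period d)).
- by congr (_ * _); apply: eq_card => x; rewrite !inE andbC.
- by apply/subsetP => x; rewrite !inE.
- by move=> x _ /eqP <-; rewrite !inE -[shiftn 1 x]/(shiftn 1 x) period_shiftn.
Qed.

Lemma sum_card_of_period d : 0 < d ->
  \sum_(b <- divisors d) #|of_period b| = #|fixed d|.
Proof.
move=> d_gt0; have card_sum b : #|of_period b| = \sum_(x : X) (period x == b : nat).
  by rewrite -sum1_card big_mkcond; apply: eq_bigr => x _; rewrite inE.
rewrite (eq_bigr _ (fun b _ => card_sum b)).
rewrite exchange_big -sum1_card [RHS]big_mkcond /=; apply: eq_bigr => x _.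
rewrite (eq_bigr (fun b => if period x == b then 1 else 0)) => [|b _]; last by case: eqP.
rewrite -big_mkcond sum1_count (eq_count (a2 := pred1 (period x))) => [|b]; last exact: eq_sym.
rewrite count_uniq_mem ?divisors_uniq // -dvdn_divisors // inE.
have [/shiftn_fix ->|pNd] := boolP (period x %| d); first by rewrite eqxx.
by case: eqP => // /shiftn_fix; rewrite (negbTE pNd).
Qed.

Section PeriodicExtension.
Variables (d : nat) (d_gt0 : 0 < d) (d_dvd_n : d %| n).

Definition periodic_ext (u : {ffun 'I_d -> A}) : X :=
  [ffun h : 'Z_n => u (Ordinal (ltn_pmod (nat_of_ord h) d_gt0))].

Lemma periodic_ext_fixed u : shiftn d (periodic_ext u) = periodic_ext u.
Proof.
apply/ffunP => h; rewrite !ffunE; congr (u _); apply: ord_inj => /=.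
by rewrite val_Zp_nat // modn_dvdm // -modnDmr modn_dvdm // modnDmr modnDr.
Qed.

Lemma periodic_ext_inj : injective periodic_ext.
Proof.
move=> u u' eq_uu'; apply/ffunP => i.
have i_lt_n : i < n := leq_trans (ltn_ord i) (dvdn_leq (isT : 0 < n) d_dvd_n).
have ext_i : Ordinal (ltn_pmod (nat_of_ord (i%:R : 'Z_n)%R) d_gt0) = i.
  by apply: ord_inj; rewrite /= val_Zp_nat // !modn_small.
by have := congr1 (fun x : X => x (i%:R)%R) eq_uu'; rewrite !ffunE ext_i.
Qed.

Lemma fixed_periodic_ext (x : X) :
  shiftn d x = x -> x = periodic_ext [ffun i : 'I_d => x (i%:R)%R].
Proof.
move=> /shiftn_fix /dvdnP[k pk]; apply/ffunP => h; rewrite !ffunE.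
have x_dk : shiftn (h %/ d * d) x = x by apply/shiftn_fix; rewrite pk mulnA dvdn_mull.
by rewrite -[in RHS]x_dk ffunE -natrD /= addnC -divn_eq natr_Zp.
Qed.

Lemma card_fixed : #|fixed d| = #|A| ^ d.
Proof.
have -> : fixed d = periodic_ext @: setT.
  apply/setP => x; rewrite inE; apply/eqP/imsetP => [/fixed_periodic_ext ->|[u _ ->]].
    by eexists.
  exact: periodic_ext_fixed.
by rewrite card_imset ?cardsT ?card_ffun ?card_ord //; apply: periodic_ext_inj.
Qed.

End PeriodicExtension.

Lemma alpha_card_orbit_reps d : d %| n -> alpha d #|A| = #|orbit_reps d|.
Proof.
move=> d_dvd_n; have d_gt0 := dvdn_gt0 (isT : 0 < n) d_dvd_n.
suff sum_eq : (\sum_(b <- divisors d) mobius (d %/ b) * Posz #|A| ^+ b)%R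
             = Posz (#|orbit_reps d| * d).
  by rewrite /alpha sum_eq PoszM mulzK // -lt0n.
apply: (mobius_inversion (g := fun b => Posz (#|orbit_reps b| * b))) => // b b_dvd_d.
have b_gt0 := dvdn_gt0 d_gt0 b_dvd_d.
rewrite -natz -natrX natz -(card_fixed b_gt0 (dvdn_trans b_dvd_d d_dvd_n)).
rewrite -sum_card_of_period // -natz natr_sum.
by apply: eq_bigr => c _; rewrite card_of_period natz.
Qed.

End Counting.

(** * Cellular automata are the shift-equivariant maps *)

Section Automata.
Variables (m : nat) (A : finType).
Local Notation n := m.+2.
Local Notation X := (config n A).

Definition shift_equivariant (tau : X -> X) :=
  forall (g : 'Z_n) x, tau (shift g x) = shift g (tau x).

Lemma is_CA_equivariant (tau : X -> X) : is_CA tau <-> shift_equivariant tau.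
Proof.
split=> [[S [mu tauE]] g x|tau_eq].
  apply/ffunP => h; rewrite tauE [RHS]ffunE tauE; congr (mu (restr S _)).
  by apply/ffunP => k; rewrite !ffunE addrA.
exists [set: 'Z_n], (fun r => tau [ffun h => r (exist _ h (in_setT h))] 0%R) => x g.
have -> : [ffun h => restr [set: 'Z_n] (shift g x) (exist _ h (in_setT h))] = shift g x.
  by apply/ffunP => h; rewrite !ffunE.
by rewrite tau_eq ffunE add0r.
Qed.

Lemma is_ICA_equivariant (p : {perm X}) : is_ICA p <-> shift_equivariant p.
Proof.
split=> [[/is_CA_equivariant //]|p_eq]; split; apply/is_CA_equivariant => // g x.
by apply: (@perm_inj _ p); rewrite p_eq !permKV.
Qed.

Section Equivariant.
Variable p : {perm X}.
Hypothesis p_eq : shift_equivariant p.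

Lemma equivariant_shiftn k x : p (shiftn k x) = shiftn k (p x).
Proof. exact: p_eq. Qed.

Lemma period_equivariant x : period (p x) = period x.
Proof. by apply: eq_period => k; rewrite -equivariant_shiftn; split=> [/perm_inj|->]. Qed.

Lemma orbit_rep_equivariant_inj x y :
  orbit_rep (p x) = orbit_rep (p y) -> orbit_rep x = orbit_rep y.
Proof.
move/orbit_rep_eq => [k pyE]; apply/orbit_rep_eq; exists k.
by apply: (@perm_inj _ p); rewrite equivariant_shiftn.
Qed.

End Equivariant.

Lemma equivariantM (s t : {perm X}) :
  shift_equivariant s -> shift_equivariant t -> shift_equivariant (s * t)%g.
Proof. by move=> s_eq t_eq g x; rewrite !permM s_eq t_eq. Qed.

End Automata.

(** * Wreath coordinates of an equivariant permutation *)

Lemma Zp_nat_eq_mod d a b : 1 < d -> a = b %[mod d] -> (a%:R : 'Z_d)%R = b%:R%R.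
Proof. by move=> d_gt1 ab; rewrite -Zp_nat_mod // ab Zp_nat_mod. Qed.

(* The identity when [g] is not injective. *)
Definition perm_of k (g : 'I_k -> 'I_k) : {perm 'I_k} :=
  if injectiveP g is ReflectT g_inj then perm g_inj else 1%g.

Lemma perm_ofE k (g : 'I_k -> 'I_k) : injective g -> perm_of g =1 g.
Proof. by rewrite /perm_of; case: injectiveP => // g_inj _ x; rewrite permE. Qed.

Section WreathCoordinates.
Variables (m : nat) (A : finType) (x0 : config m.+2 A).
Local Notation n := m.+2.
Local Notation X := (config n A).
Local Notation q := #|A|.

(* [x0] is only the default of [nth]: the indices used are [j < alpha d q = #|orbit_reps d|]. *)
Definition rep d j : X := nth x0 (enum (orbit_reps m A d)) j.
Definition rep_index (x : X) : nat := index (orbit_rep x) (enum (orbit_reps m A (period x))).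

Lemma rep_in d j : d %| n -> j < alpha d q -> rep d j \in orbit_reps m A d.
Proof.
by move=> d_dvd_n; rewrite (@alpha_card_orbit_reps m A) // cardE -mem_enum; apply: mem_nth.
Qed.

Lemma orbit_rep_rep d j : d %| n -> j < alpha d q -> orbit_rep (rep d j) = rep d j.
Proof. by move=> d_dvd_n /(rep_in d_dvd_n); rewrite !inE => /andP[_ /eqP]. Qed.

Lemma period_rep d j : d %| n -> j < alpha d q -> period (rep d j) = d.
Proof. by move=> d_dvd_n /(rep_in d_dvd_n); rewrite !inE => /andP[/eqP]. Qed.

Lemma rep_index_lt (x : X) : rep_index x < alpha (period x) q.
Proof.
by rewrite (@alpha_card_orbit_reps m A) ?period_dvdn // cardE index_mem mem_enum orbit_rep_in.
Qed.

Lemma rep_rep_index (x : X) : rep (period x) (rep_index x) = orbit_rep x.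
Proof. by rewrite /rep nth_index // mem_enum orbit_rep_in. Qed.

Lemma rep_index_rep d j : d %| n -> j < alpha d q -> rep_index (rep d j) = j.
Proof.
move=> d_dvd_n j_lt; rewrite /rep_index orbit_rep_rep // period_rep // index_uniq ?enum_uniq //.
by rewrite -cardE -(@alpha_card_orbit_reps m A).
Qed.

Lemma rep_index_shiftn k (x : X) : rep_index (shiftn k x) = rep_index x.
Proof. by rewrite /rep_index orbit_rep_shiftn period_shiftn. Qed.

(* On the orbits of period [d], listed by [rep d], an equivariant [p] acts by the
   permutation [wreath_perm p d] together with the shifts [wreath_shift p d]:
   the element (v; phi) of Z_d wr Sym_alpha(d,q). *)
Definition wreath_perm (p : {perm X}) d : {perm 'I_(alpha d q)} :=
  perm_of (fun j : 'I_(alpha d q) => insubd j (rep_index (p (rep d j)))).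

Definition wreath_shift (p : {perm X}) d : {ffun 'I_(alpha d q) -> 'Z_d} :=
  [ffun j : 'I_(alpha d q) => (offset (p (rep d j)))%:R%R].

Section Equivariant.
Variables (p : {perm X}) (d : nat).
Hypotheses (p_eq : shift_equivariant p) (d_dvd_n : d %| n).

Lemma period_equivariant_rep (j : 'I_(alpha d q)) : period (p (rep d j)) = d.
Proof. by rewrite period_equivariant // period_rep. Qed.

Lemma wreath_permE (j : 'I_(alpha d q)) :
  val (wreath_perm p d j) = rep_index (p (rep d j)).
Proof.
have idx_lt (i : 'I_(alpha d q)) : rep_index (p (rep d i)) < alpha d q.
  by have := rep_index_lt (p (rep d i)); rewrite period_equivariant_rep.
rewrite /wreath_perm perm_ofE ?val_insubd ?idx_lt // => j1 j2 /(congr1 val).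
rewrite !val_insubd !idx_lt // => idx_eq.
have : orbit_rep (p (rep d j1)) = orbit_rep (p (rep d j2)).
  by rewrite -!rep_rep_index !period_equivariant_rep idx_eq.
move/(orbit_rep_equivariant_inj p_eq); rewrite !orbit_rep_rep // => /(congr1 rep_index).
by rewrite !rep_index_rep // => /val_inj.
Qed.

Lemma equivariant_rep (j : 'I_(alpha d q)) :
  p (rep d j) = shiftn (offset (p (rep d j))) (rep d (wreath_perm p d j)).
Proof.
rewrite wreath_permE; have := period_equivariant_rep j; set y := p (rep d j).
by move=> <-; rewrite rep_rep_index shiftn_offset.
Qed.

End Equivariant.

Section Product.
Variables (s t : {perm X}) (d : nat).
Hypotheses (s_eq : shift_equivariant s) (t_eq : shift_equivariant t) (d_dvd_n : d %| n).

Lemma wreath_permM : wreath_perm (s * t) d = (wreath_perm s d * wreath_perm t d)%g.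
Proof.
apply/permP => j; apply: val_inj.
rewrite permM (wreath_permE (equivariantM s_eq t_eq) d_dvd_n) (wreath_permE t_eq d_dvd_n).
by rewrite permM (equivariant_rep s_eq d_dvd_n) equivariant_shiftn // rep_index_shiftn.
Qed.

Lemma wreath_shiftM : 1 < d ->
  wreath_shift (s * t) d = [ffun j => wreath_shift s d j + wreath_shift t d (wreath_perm s d j)]%R.
Proof.
move=> d_gt1; apply/ffunP => j; rewrite !ffunE -natrD; apply: Zp_nat_eq_mod => //.
rewrite permM {1}(equivariant_rep s_eq d_dvd_n j) equivariant_shiftn //.
rewrite {1}(equivariant_rep t_eq d_dvd_n) shiftnD.
have := rep_in d_dvd_n (ltn_ord (wreath_perm t d (wreath_perm s d j))).
set r := rep d _; rewrite !inE => /andP[/eqP r_per /eqP r_rep].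
by rewrite offset_shiftn_rep // r_per modn_mod.
Qed.

End Product.

Lemma equivariant_eq_on_reps (s t : {perm X}) d :
  shift_equivariant s -> shift_equivariant t -> d %| n ->
  wreath_perm s d = wreath_perm t d -> (1 < d -> wreath_shift s d = wreath_shift t d) ->
  forall j : 'I_(alpha d q), s (rep d j) = t (rep d j).
Proof.
move=> s_eq t_eq d_dvd_n eq_perm eq_shift j.
rewrite (equivariant_rep s_eq d_dvd_n) (equivariant_rep t_eq d_dvd_n) eq_perm.
apply/shiftn_eq_mod; rewrite period_rep //.
have [d_le1|d_gt1] := leqP d 1.
  have d1 : d = 1 by apply/anti_leq; rewrite d_le1 (dvdn_gt0 _ d_dvd_n).
  by subst d; rewrite !modn1.
have := congr1 (fun v : {ffun 'I_(alpha d q) -> 'Z_d} => nat_of_ord (v j)) (eq_shift d_gt1).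
by rewrite /= !ffunE !val_Zp_nat.
Qed.

Lemma equivariant_eq (s t : {perm X}) : shift_equivariant s -> shift_equivariant t ->
  (forall d, d %| n -> forall j : 'I_(alpha d q), s (rep d j) = t (rep d j)) -> s = t.
Proof.
move=> s_eq t_eq st_rep; apply/permP => x.
have := st_rep _ (period_dvdn x) (Ordinal (rep_index_lt x)); rewrite /= rep_rep_index => st_x.
by rewrite -(shiftn_offset x) !equivariant_shiftn // st_x.
Qed.

(* Conversely, [phi d] and [v d] prescribe the wreath coordinates for period [d];
   they are indexed by plain naturals to avoid casts between ['I_(alpha d q)] for
   provably equal [d]. *)
Section Lift.
Variables (phi v : nat -> nat -> nat).
Hypothesis phi_perm : forall d, d %| n ->
  exists s : {perm 'I_(alpha d q)}, forall j : 'I_(alpha d q), phi d j = s j.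

Definition wreath_lift (x : X) : X :=
  shiftn (offset x + v (period x) (rep_index x)) (rep (period x) (phi (period x) (rep_index x))).

Lemma phi_lt d j : d %| n -> j < alpha d q -> phi d j < alpha d q.
Proof. by move=> /phi_perm[s phiE] j_lt; rewrite (phiE (Ordinal j_lt)). Qed.

Lemma phi_inj d j1 j2 : d %| n -> j1 < alpha d q -> j2 < alpha d q ->
  phi d j1 = phi d j2 -> j1 = j2.
Proof.
move=> /phi_perm[s phiE] j1_lt j2_lt.
by rewrite (phiE (Ordinal j1_lt)) (phiE (Ordinal j2_lt)) => /val_inj/perm_inj [].
Qed.

Lemma phi_rep_index_lt (x : X) : phi (period x) (rep_index x) < alpha (period x) q.
Proof. exact: phi_lt (period_dvdn x) (rep_index_lt x). Qed.

Lemma period_wreath_lift (x : X) : period (wreath_lift x) = period x.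
Proof. by rewrite period_shiftn period_rep ?period_dvdn ?phi_rep_index_lt. Qed.

Lemma orbit_rep_wreath_lift (x : X) :
  orbit_rep (wreath_lift x) = rep (period x) (phi (period x) (rep_index x)).
Proof. by rewrite orbit_rep_shiftn orbit_rep_rep ?period_dvdn ?phi_rep_index_lt. Qed.

Lemma wreath_lift_inj : injective wreath_lift.
Proof.
move=> x1 x2 eq_lift.
have eq_per : period x2 = period x1 by rewrite -period_wreath_lift -eq_lift period_wreath_lift.
have := congr1 (@orbit_rep m A) eq_lift; rewrite !orbit_rep_wreath_lift eq_per.
set d := period x1 in eq_per *; have d_dvd_n : d %| n := period_dvdn x1.
have lt1 : rep_index x1 < alpha d q := rep_index_lt x1.
have lt2 : rep_index x2 < alpha d q by rewrite -eq_per rep_index_lt.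
move/(congr1 rep_index); rewrite !rep_index_rep ?phi_lt // => /(phi_inj d_dvd_n lt1 lt2) eq_idx.
have eq_rep : orbit_rep x1 = orbit_rep x2 by rewrite -!rep_rep_index -/d eq_per eq_idx.
move: eq_lift; rewrite /wreath_lift eq_per -/d eq_idx => /shiftn_eq_mod.
rewrite period_rep ?phi_lt // => /eqP; rewrite eqn_modDr.
rewrite !modn_small ?offset_lt -?eq_per ?offset_lt // => /eqP eq_off.
by rewrite -(shiftn_offset x1) -(shiftn_offset x2) eq_off eq_rep.
Qed.

Lemma wreath_lift_equivariant : shift_equivariant wreath_lift.
Proof.
move=> g x; rewrite !shift_shiftn /wreath_lift period_shiftn rep_index_shiftn shiftnD.
apply/shiftn_eq_mod; rewrite period_rep ?period_dvdn ?phi_rep_index_lt //.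
by rewrite -modnDml offset_shiftn modnDml addnA.
Qed.

Local Notation lift := (perm wreath_lift_inj).

Lemma lift_equivariant : shift_equivariant lift.
Proof. by move=> g x; rewrite !permE wreath_lift_equivariant. Qed.

Lemma wreath_perm_lift d (j : 'I_(alpha d q)) :
  d %| n -> val (wreath_perm lift d j) = phi d j.
Proof.
move=> d_dvd_n; rewrite (wreath_permE lift_equivariant) //.
by rewrite permE /wreath_lift period_rep // rep_index_shiftn rep_index_rep ?rep_index_rep ?phi_lt.
Qed.

Lemma wreath_shift_lift d (j : 'I_(alpha d q)) : d %| n -> 1 < d ->
  wreath_shift lift d j = (v d j)%:R%R.
Proof.
move=> d_dvd_n d_gt1; rewrite ffunE permE /wreath_lift period_rep // rep_index_rep //.
rewrite (offset_rep (orbit_rep_rep d_dvd_n (ltn_ord j))) add0n.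
rewrite offset_shiftn_rep ?orbit_rep_rep ?phi_lt //.
by rewrite period_rep ?phi_lt //; apply: Zp_nat_eq_mod; rewrite ?modn_mod.
Qed.

End Lift.

End WreathCoordinates.

(** * The isomorphism with the product of wreath products *)

Lemma alpha1 q : alpha 1 q = q.
Proof. by rewrite /alpha (_ : divisors 1 = [:: 1]) // big_seq1 mul1r expr1 divz1. Qed.

Section Divisors.
Variable n : nat.
Hypothesis n_gt0 : 0 < n.

Lemma mem_divs d : (d \in divs n) = (d %| n) && (d != 1).
Proof. by rewrite mem_filter -dvdn_divisors // andbC. Qed.

Lemma dv_dvdn (i : 'I_(size (divs n))) : dv i %| n.
Proof. by have := mem_nth 0 (ltn_ord i); rewrite mem_divs => /andP[]. Qed.

Lemma dv_gt1 (i : 'I_(size (divs n))) : 1 < dv i.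
Proof.
have := mem_nth 0 (ltn_ord i); rewrite mem_divs -/(dv i) => /andP[/(dvdn_gt0 n_gt0)].
by case: (dv i) => [|[|]].
Qed.

Lemma dv_inj : injective (@dv n).
Proof.
move=> i1 i2 /eqP; rewrite nth_uniq ?filter_uniq ?divisors_uniq // => /eqP; exact: val_inj.
Qed.

Lemma pick_dv (i : 'I_(size (divs n))) : [pick i' | dv i' == dv i] = Some i.
Proof. by case: pickP => [i' /eqP/dv_inj -> //|/(_ i)]; rewrite eqxx. Qed.

Lemma dvP d : d %| n -> d != 1 -> exists i : 'I_(size (divs n)), dv i = d.
Proof.
move=> d_dvd_n dN1; have d_in : d \in divs n by rewrite mem_divs d_dvd_n.
by exists (Ordinal (etrans (index_mem _ _) d_in)); rewrite /dv nth_index.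
Qed.

End Divisors.

Section Isomorphism.
Variables (m : nat) (A : finType) (x0 : config m.+2 A).
Local Notation n := m.+2.
Local Notation X := (config n A).
Local Notation q := #|A|.
Local Notation wreath_perm := (wreath_perm x0).
Local Notation wreath_shift := (wreath_shift x0).

Definition wreath_coords (p : {perm X}) : WRprod n q :=
  ([ffun i => (wreath_shift p (dv i), wreath_perm p (dv i))],
   cast_perm (alpha1 q) (wreath_perm p 1)).

Lemma wreath_coordsM (s t : {perm X}) : shift_equivariant s -> shift_equivariant t ->
  wreath_coords (s * t) = rhs_mul (wreath_coords s) (wreath_coords t).
Proof.
move=> s_eq t_eq; congr pair.
  apply/ffunP => i; have dv_n := dv_dvdn (isT : 0 < n) i; rewrite !ffunE /wr_mul /=.
  rewrite (wreath_shiftM x0 s_eq t_eq dv_n (dv_gt1 (isT : 0 < n) i)).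
  by rewrite (wreath_permM x0 s_eq t_eq dv_n).
by rewrite (wreath_permM x0 s_eq t_eq (dvd1n n)) cast_perm_morphM.
Qed.

Lemma wreath_coords_inj (s t : {perm X}) : shift_equivariant s -> shift_equivariant t ->
  wreath_coords s = wreath_coords t -> s = t.
Proof.
move=> s_eq t_eq st_coords; apply: (@equivariant_eq _ _ x0) => // d d_dvd_n.
have [->|dN1] := eqVneq d 1.
  apply: (@equivariant_eq_on_reps _ _ x0) => //.
  exact: cast_perm_inj (congr1 snd st_coords).
have [i <-] := dvP (isT : 0 < n) d_dvd_n dN1.
have := congr1 (fun y : WRprod n q => y.1 i) st_coords.
rewrite /= !ffunE => -[eq_shift eq_perm].
by apply: (@equivariant_eq_on_reps _ _ x0) => //; apply: dv_dvdn.
Qed.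

Definition nat_fun k (F : 'I_k -> nat) (j : nat) : nat :=
  if insub j is Some j' then F j' else 0.

Lemma nat_funE k (F : 'I_k -> nat) (j : 'I_k) : nat_fun F j = F j.
Proof. by rewrite /nat_fun valK. Qed.

Section Surjectivity.
Variable y : WRprod n q.

Definition coord_perm d : nat -> nat :=
  if d == 1 then nat_fun (fun j : 'I_(alpha 1 q) => val (y.2 (cast_ord (alpha1 q) j)))
  else if [pick i | dv i == d] is Some i then nat_fun (fun j => val ((y.1 i).2 j))
  else fun _ => 0.

Definition coord_shift d : nat -> nat :=
  if [pick i | dv i == d] is Some i then nat_fun (fun j => val ((y.1 i).1 j)) else fun _ => 0.

Lemma coord_perm_dv (i : 'I_(size (divs n))) (j : 'I_(alpha (dv i) q)) :
  coord_perm (dv i) j = (y.1 i).2 j.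
Proof.
have dvN1 : (dv i == 1) = false by rewrite gtn_eqF ?dv_gt1.
by rewrite /coord_perm dvN1 pick_dv nat_funE.
Qed.

Lemma coord_perm_perm d : d %| n ->
  exists s : {perm 'I_(alpha d q)}, forall j : 'I_(alpha d q), coord_perm d j = s j.
Proof.
move=> d_dvd_n; have [->|dN1] := eqVneq d 1.
  exists (cast_perm (esym (alpha1 q)) y.2) => j.
  by rewrite /coord_perm eqxx nat_funE cast_permE; congr (val (y.2 _)); apply: val_inj.
have [i <-] := dvP (isT : 0 < n) d_dvd_n dN1.
by exists (y.1 i).2 => j; rewrite coord_perm_dv.
Qed.

Local Notation lift := (perm (@wreath_lift_inj m A x0 coord_perm coord_shift coord_perm_perm)).

Lemma wreath_coords_lift : wreath_coords lift = y.
Proof.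
rewrite /wreath_coords [RHS]surjective_pairing; congr pair.
  apply/ffunP => i; rewrite ffunE [RHS]surjective_pairing.
  have dv_n := dv_dvdn (isT : 0 < n) i; congr pair.
    apply/ffunP => j; have dv_gt1 := dv_gt1 (isT : 0 < n) i.
    rewrite (wreath_shift_lift x0 coord_shift coord_perm_perm j dv_n dv_gt1).
    by rewrite /coord_shift pick_dv nat_funE natr_Zp.
  by apply/permP => j; apply: val_inj; rewrite wreath_perm_lift // coord_perm_dv.
apply/permP => k; apply: val_inj; rewrite cast_permE /= wreath_perm_lift ?dvd1n //.
by rewrite /coord_perm eqxx nat_funE cast_ordKV.
Qed.

End Surjectivity.

Lemma wreath_coords_surj (y : WRprod n q) :
  exists s : {perm X}, shift_equivariant s /\ wreath_coords s = y.
Proof. by eexists; split; [apply: lift_equivariant | apply: wreath_coords_lift]. Qed.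

End Isomorphism.

Theorem lemma4 (n q : nat) (A : finType) :
  (2 <= n)%N -> #|A| = q -> (2 <= q)%N ->
  exists f : {perm config n A} -> WRprod n q,
    (forall s t : {perm config n A}, is_ICA s -> is_ICA t -> f (s * t)%g = rhs_mul (f s) (f t)) /\
    (forall s t : {perm config n A}, is_ICA s -> is_ICA t -> f s = f t -> s = t) /\
    (forall y : WRprod n q, exists s, is_ICA s /\ f s = y).
Proof.
case: n => [|[|m]] // _ <- q_ge2.
have [a _] : exists a : A, true by apply/card_gt0P; apply: leq_trans q_ge2.
exists (wreath_coords [ffun _ => a]); split; [|split].
- by move=> s t /is_ICA_equivariant s_eq /is_ICA_equivariant t_eq; apply: wreath_coordsM.
- by move=> s t /is_ICA_equivariant s_eq /is_ICA_equivariant t_eq; apply: wreath_coords_inj.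
- move=> y; have [s [s_eq <-]] := wreath_coords_surj [ffun _ => a] y.
  by exists s; split; first exact/is_ICA_equivariant.
Qed.
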